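(* If $X$ is a non-separated-points space, then $X$ is dense-pathwise connected, i.e., every dense subset of $X$ (with the subspace topology) is pathwise connected.
   Context: Two distinct points $x,y$ of a space $X$ are called not $T_1$-points if there exists $z\in\{x,y\}$ such that $\{x,y\}\subset U$ for every open neighborhood $U$ of $z$ in $X$. A space $X$ is a non-separated-points space if every two distinct points of $X$ are not $T_1$-points. *)

From HB Require Import structures.
From mathcomp Require Import all_boot all_order all_algebra.
From mathcomp Require Import all_classical all_reals all_analysis.
From mathcomp Require Import Rstruct Rstruct_topology.
From Stdlib Require Import Rdefinitions.
Set Implicit Arguments. Unset Strict Implicit. Unset Printing Implicit Defensive.
Import Order.TTheory GRing.Theory Num.Theory.
Local Open Scope classical_set_scope.
Local Open Scope ring_scope.

Definition not_T1_points (X : topologicalType) (x y : X) : Prop :=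
  x <> y /\
  exists z : X, (z = x \/ z = y) /\
    forall U : set X, open U -> U z -> U x /\ U y.

Definition non_separated_points_space (X : topologicalType) : Prop :=
  forall x y : X, x <> y -> not_T1_points x y.

(* The unit interval [0,1] of the real line, with the subspace topology
   (set_type carries the initial topology of the inclusion). *)
Definition unit_interval : Type := set_type (`[0%R, 1%R] : set Rdefinitions.R).

Definition path_connected_space (T : topologicalType) : Prop :=
  forall x y : T, exists f : unit_interval -> T,
    continuous f /\
    (forall t : unit_interval, set_val t = 0%R -> f t = x) /\
    (forall t : unit_interval, set_val t = 1%R -> f t = y).

Definition dense_pathwise_connected (X : topologicalType) : Prop :=
  forall A : set X, dense A -> path_connected_space (set_type A).

From HB Require Import structures.
From mathcomp Require Import all_boot all_order all_algebra.
From mathcomp Require Import all_classical all_reals all_analysis.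
From mathcomp Require Import Rstruct Rstruct_topology.

(* Taking the open
     part to be (0,1] or [0,1) joins p to q and q to p by a path.
   - In a non-separated-points space, for any two distinct points one of them
     has all its open neighbourhoods containing the other, so any two points
     are joined by such a step path.
   - The neighbourhood condition passes from X to any subspace, since the
     open sets of a subspace are traces of open sets of X. *)

Import Order.TTheory GRing.Theory Num.Theory.
Local Open Scope classical_set_scope.

(* Every open neighbourhood of p contains q; equivalently, p lies in the
   closure of {q}. *)
Definition opens_contain {T : topologicalType} (p q : T) : Prop :=
  forall U : set T, open U -> U p -> U q.

(* x and y are joined by a path; path_connected_space T is (up to
   conversion of the real literals 0 and 1) forall x y, joined x y. *)
Definition joined {T : topologicalType} (x y : T) : Prop :=
  exists f : unit_interval -> T,
    continuous f /\
    (forall t : unit_interval, set_val t = 0%R -> f t = x) /\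
    (forall t : unit_interval, set_val t = 1%R -> f t = y).

Lemma step_continuous (T : topologicalType) (p q : T) (O : set unit_interval) :
  open O -> opens_contain p q ->
  continuous (fun t : unit_interval => if pselect (O t) then q else p).
Proof.
move=> oO hpq; apply/continuousP => U oU.
have [Up|Unp] := pselect (U p).
  have Uq := hpq U oU Up.
  rewrite (_ : _ @^-1` _ = setT); first exact: openT.
  by apply/seteqP; split => t //= _; case: pselect.
have [Uq|Unq] := pselect (U q).
  rewrite (_ : _ @^-1` _ = O) //.
  by apply/seteqP; split => t /=; case: pselect.
rewrite (_ : _ @^-1` _ = set0); first exact: open0.
by apply/seteqP; split => t //=; case: pselect.
Qed.

Lemma joined_of_opens_contain (T : topologicalType) (p q : T) :
  opens_contain p q -> joined p q.
Proof.
move=> hpq; exists (fun t : unit_interval =>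
  if pselect ((0 < set_val t)%R) then q else p); split.
  apply: (@step_continuous _ _ _ (fun t : unit_interval => (0 < set_val t)%R)) => //.
  by exists [set x | (0 < x)%R]; first exact: open_gt.
by split => t /= ->; case: pselect => //=; rewrite ltxx.
Qed.

Lemma joined_of_opens_contain_rev (T : topologicalType) (p q : T) :
  opens_contain p q -> joined q p.
Proof.
move=> hpq; exists (fun t : unit_interval =>
  if pselect ((set_val t < 1)%R) then q else p); split.
  apply: (@step_continuous _ _ _ (fun t : unit_interval => (set_val t < 1)%R)) => //.
  by exists [set x | (x < 1)%R]; first exact: open_lt.
by split => t /= ->; case: pselect => //=; rewrite ltxx.
Qed.

Lemma not_T1_pointsE (T : topologicalType) (x y : T) :
  not_T1_points x y <-> x <> y /\ (opens_contain x y \/ opens_contain y x).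
Proof.
split=> [[xy [z [[->|->] hz]]]|[xy [hxy|hyx]]]; split=> //.
- by left=> U oU /(hz U oU) [].
- by right=> U oU /(hz U oU) [].
- by exists x; split; [left | move=> U oU Ux; split => //; exact: hxy].
- by exists y; split; [right | move=> U oU Uy; split => //; exact: hyx].
Qed.

Lemma nsp_path_connected (T : topologicalType) :
  non_separated_points_space T -> path_connected_space T.
Proof.
move=> nsp x y; have [<-|xy] := pselect (x = y).
  by exists (fun=> x); split; [exact: cst_continuous | split].
have /not_T1_pointsE [_ [hxy|hyx]] := nsp _ _ xy.
- exact: joined_of_opens_contain.
- exact: joined_of_opens_contain_rev.
Qed.

(* Open sets of a subspace are traces of open sets of X, so the
   neighbourhood condition is inherited by the subspace. *)
Lemma opens_contain_subspace (X : topologicalType) (A : set X)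
    (a b : set_type A) :
  opens_contain (set_val a) (set_val b) -> opens_contain a b.
Proof. by move=> h U [W oW <-] /= Wa; exact: h. Qed.

Lemma nsp_subspace (X : topologicalType) (A : set X) :
  non_separated_points_space X -> non_separated_points_space (set_type A).
Proof.
move=> nsp a b ab; apply/not_T1_pointsE; split=> //.
have vab : set_val a <> set_val b by move=> e; apply: ab; exact: val_inj.
have /not_T1_pointsE [_ [hab|hba]] := nsp _ _ vab.
- by left; exact: opens_contain_subspace.
- by right; exact: opens_contain_subspace.
Qed.

Theorem theorem5p6 (X : topologicalType) :
  non_separated_points_space X -> dense_pathwise_connected X.
Proof.
move=> nsp A _.
apply: nsp_path_connected.
exact: nsp_subspace.
Qed.
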